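(* Let $N$ be a tree-child phylogenetic network such that no two parents of a hybrid node are connected by a path, and let $N'=(V',E')$ be its contracted version. For every $u\in V'$ let $M_u=\{w\in V'\mid C^{(N')}(w)\subsetneq C^{(N')}(u)\}$. Then the maximal elements of $M_u$ with respect to the path ordering on $N'$ are exactly the children of $u$ in $N'$.
   Context: A DAG is labeled in a finite set $S$ if its leaves (out-degree 0) are bijectively labeled by $S$. A tree node has in-degree at most 1; a hybrid node has in-degree greater than 1; a tree child is a child that is a tree node. A tree-child phylogenetic network is a rooted DAG labeled in $S$ in which every non-leaf node has at least one tree child, no tree node has out-degree 1, and every hybrid node has out-degree exactly 1. The condition that no two parents of a hybrid node are connected by a path means: if $u_1,u_2$ are the parents of a hybrid node, there is no path $u_1\rightsquigarrow u_2$ nor $u_2\rightsquigarrow u_1$. The contracted version $N'$ of $N$ is obtained as follows: for every hybrid node $u$ of $N$, with only child $\bar u$ whose children are $\bar u_1,\dots,\bar u_k$, remove $\bar u$ and all arcs incident to it, and add arcs $(u,\bar u_1),\dots,(u,\bar u_k)$; thus $V'$ is the set of nodes of $N$ other than children of hybrid nodes. $C^{(N')}(w)$ is the set of leaves that are descendants of $w$ in $N'$. The path ordering on $N'$ is $x\ge y$ iff there is a path from $x$ to $y$ in $N'$. *)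

From mathcomp Require Import all_boot.
Set Implicit Arguments. Unset Strict Implicit. Unset Printing Implicit Defensive.

Section Networks.
Variable V : finType.
Variable E : rel V.

Definition indeg (v : V) : nat := #|[set u | E u v]|.
Definition outdeg (v : V) : nat := #|[set w | E v w]|.

Definition is_leaf (v : V) : bool := outdeg v == 0.
Definition is_tree_node (v : V) : bool := indeg v <= 1.
Definition is_hybrid (v : V) : bool := 1 < indeg v.

Definition acyclic : Prop := forall u v, E u v -> ~~ connect E v u.

Definition rooted : Prop :=
  exists r, indeg r = 0 /\ forall v, connect E r v.

Definition labeled_in (S : finType) (lab : V -> S) : Prop :=
  {in is_leaf &, injective lab} /\ forall s : S, exists2 v, is_leaf v & lab v = s.

Definition tree_child_network (S : finType) (lab : V -> S) : Prop :=
  [/\ acyclic, rooted, labeled_in lab &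
      [/\ (forall v, ~~ is_leaf v -> exists w, E v w && is_tree_node w),
           (forall v, is_tree_node v -> outdeg v != 1)
         & (forall v, is_hybrid v -> outdeg v = 1)]].

Definition no_parent_paths : Prop :=
  forall h u1 u2, is_hybrid h -> E u1 h -> E u2 h -> u1 != u2 ->
    ~~ connect E u1 u2 /\ ~~ connect E u2 u1.

Definition inV' (v : V) : bool := ~~ [exists u, is_hybrid u && E u v].

Definition E' : rel V := fun x y =>
  [&& inV' x, inV' y &
      E x y || (is_hybrid x && [exists z, E x z && E z y])].

Definition outdeg' (v : V) : nat := #|[set w | E' v w]|.
Definition is_leaf' (v : V) : bool := inV' v && (outdeg' v == 0).

Definition cluster' (w : V) : {set V} := [set x | is_leaf' x && connect E' w x].

Definition path_ge' (x y : V) : bool := connect E' x y.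

Definition M_set (u : V) : {set V} :=
  [set w | inV' w && (cluster' w \proper cluster' u)].

Definition maximal_in (A : {set V}) (w : V) : Prop :=
  w \in A /\ forall w', w' \in A -> path_ge' w' w -> w' = w.

End Networks.

(* The contracted network N' is acyclic, every non-leaf of N' has a child
   whose only parent it is and has at least two children, and no two distinct
   parents of a node of N' are connected by a path; all four properties are
   inherited from N because the children of x in N' are the children in N of
   x, or of the unique child of x when x is hybrid.
   In any such DAG, following these unique-parent children down from x reaches
   a leaf whose ancestors are all comparable with x, so C(x) included in C(u)
   forces x and u to be comparable.  A sibling of a child w of u then supplies
   a leaf outside C(w), putting w in M_u; a maximal w in M_u lies below u, so
   the first step of a path from u to it is a member of M_u above it; and a
   node of M_u strictly above a child w of u would yield a second parent p of
   w, and the leaf below p's unique-parent child makes p and u comparable. *)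

From mathcomp Require Import all_boot.
Set Implicit Arguments. Unset Strict Implicit. Unset Printing Implicit Defensive.

Section Connect.
Variables (T : finType) (e : rel T).

Lemma connect_first_step x y :
  connect e x y -> x != y -> exists2 c, e x c & connect e c y.
Proof.
case/connectP=> [[|c s]] /= => [_ -> | /andP[xc cs] ->]; first by rewrite eqxx.
by exists c => //; apply/connectP; exists s.
Qed.

Lemma connect_last_step x y :
  connect e x y -> x != y -> exists2 p, connect e x p & e p y.
Proof.
case/connectP=> s; elim/last_ind: s => [|s z _] /= => [_ -> | ]; first by rewrite eqxx.
rewrite rcons_path last_rcons => /andP[xs sz] -> _.
by exists (last x s) => //; apply/connectP; exists s.
Qed.

Lemma connect_unique_parent u p t :
  (forall y, e y t -> y = p) -> connect e u t -> u != t -> connect e u p.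
Proof. by move=> parent_t /connect_last_step ut /ut[q uq /parent_t <-]. Qed.

Lemma is_leafP x : reflect (forall y, ~~ e x y) (is_leaf e x).
Proof.
rewrite /is_leaf /outdeg cards_eq0; apply: (iffP eqP) => [x0 y | no_succ].
  by apply: contraFN (in_set0 y); rewrite -x0 inE.
by apply/setP=> y; rewrite !inE (negbTE (no_succ y)).
Qed.

End Connect.

Section StrictlyBelow.
Variables (T : finType) (e : rel T) (D : pred T).

Definition cluster (w : T) : {set T} :=
  [set l | D l && is_leaf e l && connect e w l].

(* For [e := E' E] and [D := inV' E] these are convertible to [cluster'] and
   [M_set]. *)
Definition strictly_below (u : T) : {set T} :=
  [set w | D w && (cluster w \proper cluster u)].

Lemma cluster_connect a b : connect e a b -> cluster b \subset cluster a.
Proof.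
move=> ab; apply/subsetP=> l; rewrite !inE => /andP[-> bl].
exact: connect_trans ab bl.
Qed.

Hypothesis e_acyclic : acyclic e.
Hypothesis e_closed : forall x y, e x y -> D y.
Hypothesis tree_child :
  forall x w, e x w -> exists2 t, e x t & forall y, e y t -> y = x.
Hypothesis two_children : forall x w, e x w -> exists2 c, e x c & c != w.
Hypothesis coparents_unconnected :
  forall u p w, e u w -> e p w -> u != p -> ~~ connect e u p.

(* The leaf is reached from x along tree children, so each of its ancestors
   lies on that path or above x. *)
Lemma exists_leaf_below x : D x ->
  exists2 l, l \in cluster x &
    forall y, connect e y l -> connect e y x || connect e x y.
Proof.
have [n] := ubnP #|[set y | connect e x y]|; elim: n x => // n IHn x.
move=> size_x Dx; have [w xw | no_child] := pickP (e x); last first.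
  exists x; last by move=> y ->.
  by rewrite !inE Dx connect0 andbT; apply/is_leafP=> y; rewrite no_child.
have [t xt parent_t] := tree_child xw.
have lt_size : #|[set y | connect e t y]| < #|[set y | connect e x y]|.
  apply: proper_card; rewrite properE; apply/andP; split.
    by apply/subsetP=> y; rewrite !inE; apply: connect_trans (connect1 xt).
  by apply/subsetPn; exists x; rewrite !inE ?connect0 ?e_acyclic.
have [l tl comp_l] := IHn t (leq_trans lt_size size_x) (e_closed xt).
exists l; first by apply: subsetP tl; apply: cluster_connect (connect1 xt).
move=> y /comp_l /orP[yt | ty]; last by rewrite (connect_trans (connect1 xt) ty) orbT.
have [-> | nyt] := eqVneq y t; first by rewrite (connect1 xt) orbT.
by rewrite (connect_unique_parent parent_t yt nyt).
Qed.

Lemma cluster_sub_comparable u x : D x -> cluster x \subset cluster u ->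
  connect e u x || connect e x u.
Proof.
move=> Dx /subsetP sub_xu; have [l xl comp_l] := exists_leaf_below Dx.
by apply: comp_l; move: (sub_xu l xl); rewrite inE => /andP[_].
Qed.

Lemma children_unconnected u a b :
  e u a -> e u b -> a != b -> ~~ connect e a b.
Proof.
move=> ua ub nab; apply/negP=> /connect_last_step/(_ nab)[p ap pb].
have [pu | npu] := eqVneq p u; first by move: (e_acyclic ua); rewrite -pu ap.
have nup : u != p by rewrite eq_sym.
by move: (coparents_unconnected ub pb nup); rewrite (connect_trans (connect1 ua) ap).
Qed.

Lemma child_strictly_below u w : e u w -> w \in strictly_below u.
Proof.
move=> uw; rewrite inE (e_closed uw) properEneq cluster_connect ?connect1 // andbT.
apply/eqP=> cluster_wu; have [c uc ncw] := two_children uw.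
have /cluster_sub_comparable : cluster c \subset cluster w.
  by rewrite cluster_wu cluster_connect ?connect1.
have nwc : w != c by rewrite eq_sym.
case/(_ (e_closed uc))/orP=> [wc | cw].
  by move: (children_unconnected uw uc nwc); rewrite wc.
by move: (children_unconnected uc uw ncw); rewrite cw.
Qed.

Lemma maximal_strictly_below_child u w :
  w \in strictly_below u ->
  (forall w', w' \in strictly_below u -> connect e w' w -> w' = w) -> e u w.
Proof.
rewrite inE => /andP[Dw below_w] w_max.
have := cluster_sub_comparable Dw (proper_sub below_w).
case/orP=> [uw | wu]; last by rewrite properE (cluster_connect wu) andbF in below_w.
have [uw' | nuw] := eqVneq u w; first by rewrite uw' properxx in below_w.
have [c uc cw] := connect_first_step uw nuw.
by rewrite -(w_max c (child_strictly_below uc) cw).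
Qed.

Lemma child_maximal_strictly_below u w w' : e u w ->
  w' \in strictly_below u -> connect e w' w -> w' = w.
Proof.
move=> uw; rewrite inE => /andP[_ below_w'] w'w; have [// | nw'w] := eqVneq w' w.
have [p w'p pw] := connect_last_step w'w nw'w.
have [pu | npu] := eqVneq p u.
  by rewrite properE -pu (cluster_connect w'p) andbF in below_w'.
have nup : u != p by rewrite eq_sym.
have [t pt parent_t] := tree_child pw.
have : cluster t \subset cluster u.
  apply: subset_trans (proper_sub below_w').
  exact: cluster_connect (connect_trans w'p (connect1 pt)).
case/(cluster_sub_comparable (e_closed pt))/orP=> [ut | tu].
  have [tu | nut] := eqVneq u t.
    by move: (coparents_unconnected pw uw npu); rewrite tu (connect1 pt).
  by move: (coparents_unconnected uw pw nup); rewrite (connect_unique_parent parent_t ut nut).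
by move: (coparents_unconnected pw uw npu); rewrite (connect_trans (connect1 pt) tu).
Qed.

Theorem maximal_strictly_below_iff_child u w :
  (w \in strictly_below u /\
     forall w', w' \in strictly_below u -> connect e w' w -> w' = w) <-> e u w.
Proof.
split=> [[]|uw]; first exact: maximal_strictly_below_child.
by split=> [|w']; [apply: child_strictly_below | apply: child_maximal_strictly_below].
Qed.

End StrictlyBelow.

Section Contraction.
Variables (V : finType) (E : rel V).

Lemma tree_nodeE v : is_tree_node E v = ~~ is_hybrid E v.
Proof. by rewrite /is_hybrid -leqNgt. Qed.

Lemma tree_node_parent_uniq t a b : is_tree_node E t -> E a t -> E b t -> a = b.
Proof. by move=> /card_le1_eqP t_tree a_t b_t; apply: t_tree; rewrite inE. Qed.

Lemma hybrid_of_two_parents a b w : E a w -> E b w -> a != b -> is_hybrid E w.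
Proof.
move=> aw bw; apply: contraNT; rewrite -tree_nodeE => w_tree.
by rewrite (tree_node_parent_uniq w_tree aw bw).
Qed.

Lemma hybrid_child_notin_V' h z : is_hybrid E h -> E h z -> ~~ inV' E z.
Proof. by move=> hh hz; rewrite negbK; apply/existsP; exists h; rewrite hh hz. Qed.

Hypothesis hybrid_outdeg1 : forall v, is_hybrid E v -> outdeg E v = 1.
Hypothesis tree_child : forall v, ~~ is_leaf E v -> exists w, E v w && is_tree_node E w.

Lemma hybrid_child_uniq h a b : is_hybrid E h -> E h a -> E h b -> a = b.
Proof.
move=> /hybrid_outdeg1/eqP; rewrite eqn_leq => /andP[/card_le1_eqP h_le1 _] ha hb.
by apply: h_le1; rewrite inE.
Qed.

Lemma hybrid_child_tree_node h z : is_hybrid E h -> E h z -> is_tree_node E z.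
Proof.
move=> hh hz; have [|t /andP[ht t_tree]] := tree_child (v := h).
  by apply/is_leafP=> /(_ z); rewrite hz.
by rewrite (hybrid_child_uniq hh hz ht).
Qed.

Lemma nonhybrid_child_in_V' x c : ~~ is_hybrid E x -> E x c -> inV' E c.
Proof.
move=> hx xc; apply/existsP=> -[h /andP[hh hc]].
by rewrite (tree_node_parent_uniq (hybrid_child_tree_node hh hc) xc hc) hh in hx.
Qed.

(* A node of N' takes its children in N' from [base x]: itself, or its unique
   child in N if it is a hybrid node. *)
Definition base (x : V) : V :=
  if is_hybrid E x then odflt x [pick z | E x z] else x.

Lemma base_nonhybrid x : ~~ is_hybrid E x -> base x = x.
Proof. by rewrite /base => /negbTE->. Qed.

Lemma base_hybrid x : is_hybrid E x -> E x (base x).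
Proof.
move=> hx; rewrite /base hx; case: pickP => //= no_child.
have /card_gt0P[z] : 0 < outdeg E x by rewrite hybrid_outdeg1.
by rewrite inE no_child.
Qed.

Lemma connect_base x : connect E x (base x).
Proof.
have [hx | /base_nonhybrid-> //] := boolP (is_hybrid E x).
exact: connect1 (base_hybrid hx).
Qed.

Lemma base_tree_node x : is_tree_node E (base x).
Proof.
have [hx | hx] := boolP (is_hybrid E x); last by rewrite base_nonhybrid ?tree_nodeE.
exact: hybrid_child_tree_node hx (base_hybrid hx).
Qed.

Lemma E'_base x y : inV' E x -> E' E x y = E (base x) y.
Proof.
move=> Vx; rewrite /E' Vx /=; apply/idP/idP.
  case/andP=> Vy /orP[xy | /andP[hx /existsP[z /andP[xz zy]]]].
    have [hx | /base_nonhybrid-> //] := boolP (is_hybrid E x).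
    by rewrite (negbTE (hybrid_child_notin_V' hx xy)) in Vy.
  by rewrite (hybrid_child_uniq hx (base_hybrid hx) xz).
move=> bxy; rewrite (nonhybrid_child_in_V' _ bxy) -?tree_nodeE ?base_tree_node //=.
have [hx | /base_nonhybrid bx] := boolP (is_hybrid E x); last by rewrite -bx bxy.
by apply/orP; right; apply/existsP; exists (base x); rewrite base_hybrid.
Qed.

Lemma base_in_V' x : inV' E x -> inV' E (base x) = ~~ is_hybrid E x.
Proof.
move=> Vx; have [hx | /base_nonhybrid-> //] := boolP (is_hybrid E x).
exact/negbTE/(hybrid_child_notin_V' hx (base_hybrid hx)).
Qed.

Lemma base_inj : {in inV' E &, injective base}.
Proof.
move=> x y Vx Vy bxy.
have hxy : is_hybrid E y = is_hybrid E x.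
  by apply: negb_inj; rewrite -(base_in_V' Vx) -(base_in_V' Vy) bxy.
have [hx | hx] := boolP (is_hybrid E x).
  apply: tree_node_parent_uniq (base_tree_node x) (base_hybrid hx) _.
  by rewrite bxy base_hybrid ?hxy.
by rewrite -(base_nonhybrid hx) bxy base_nonhybrid ?hxy.
Qed.

Lemma E'_first_step x y : E' E x y -> exists2 c, E x c & connect E c y.
Proof.
move=> xy; have Vx : inV' E x by case/andP: xy.
rewrite E'_base // in xy; have [hx | /base_nonhybrid bx] := boolP (is_hybrid E x).
  by exists (base x); rewrite ?base_hybrid ?connect1.
by rewrite bx in xy; exists y.
Qed.

Lemma connect_E'_connect x y : connect (E' E) x y -> connect E x y.
Proof.
apply: connect_sub => {}x {}y /E'_first_step[c xc cy].
exact: connect_trans (connect1 xc) cy.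
Qed.

Lemma E'_closed x y : E' E x y -> inV' E y.
Proof. by case/and3P. Qed.

Hypothesis E_acyclic : acyclic E.

Lemma E'_acyclic : acyclic (E' E).
Proof.
move=> x y /E'_first_step[c xc cy]; apply/negP=> /connect_E'_connect yx.
by move: (E_acyclic xc); rewrite (connect_trans cy yx).
Qed.

Lemma E'_tree_child x w :
  E' E x w -> exists2 t, E' E x t & forall y, E' E y t -> y = x.
Proof.
move=> xw; have Vx : inV' E x by case/andP: xw.
rewrite E'_base // in xw; have [|t /andP[bt t_tree]] := tree_child (v := base x).
  by apply/is_leafP=> /(_ w); rewrite xw.
exists t => [|y yt]; first by rewrite E'_base.
have Vy : inV' E y by case/andP: yt.
rewrite E'_base // in yt; apply: base_inj => //.
exact: tree_node_parent_uniq t_tree yt bt.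
Qed.

Hypothesis tree_outdeg : forall v, is_tree_node E v -> outdeg E v != 1.

Lemma E'_two_children x w : E' E x w -> exists2 c, E' E x c & c != w.
Proof.
move=> xw; have Vx : inV' E x by case/andP: xw.
rewrite E'_base // in xw.
have : 1 < outdeg E (base x).
  have : ~~ is_leaf E (base x) by apply/is_leafP=> /(_ w); rewrite xw.
  by move: (tree_outdeg (base_tree_node x)); rewrite /is_leaf; case: outdeg => [|[]].
rewrite /outdeg (cardsD1 w) inE xw ltnS => /card_gt0P[c].
by rewrite !inE => /andP[cw bc]; exists c; rewrite ?E'_base.
Qed.

Hypothesis no_paths : no_parent_paths E.

Lemma E'_coparents_unconnected u p w :
  E' E u w -> E' E p w -> u != p -> ~~ connect (E' E) u p.
Proof.
move=> uw pw nup; have Vu : inV' E u by case/andP: uw.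
have Vp : inV' E p by case/andP: pw.
rewrite E'_base // in uw; rewrite E'_base // in pw.
have nb : base u != base p by apply: contra nup => /eqP/base_inj-> //.
apply/negP=> /connect_first_step/(_ nup)[c uc cp].
have [/negP no_path _] := no_paths (hybrid_of_two_parents uw pw nb) uw pw nb.
apply: no_path; rewrite E'_base // in uc; apply: connect_trans (connect1 uc) _.
exact: connect_trans (connect_E'_connect cp) (connect_base p).
Qed.

End Contraction.

Theorem lemma7 (S V : finType) (E : rel V) (lab : V -> S) :
  tree_child_network E lab ->
  no_parent_paths E ->
  forall u, inV' E u ->
  forall w, maximal_in E (M_set E u) w <-> E' E u w.
Proof.
case=> E_acyclic _ _ [tree_child tree_outdeg hybrid_outdeg1] no_paths u _ w.
apply: (maximal_strictly_below_iff_child (D := inV' E)).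
- exact: E'_acyclic.
- exact: E'_closed.
- exact: E'_tree_child.
- exact: E'_two_children.
- exact: E'_coparents_unconnected.
Qed.
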